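(* Let $\mathbb{X},\mathbb{Y}$ be real Banach spaces of dimension greater than $1$, and let $\mathcal{F}$ be a family of norm one operators in $\mathbb{L}(\mathbb{X},\mathbb{Y})$. Then the pair $(\mathbb{X},\mathbb{Y})$ has uniform sBPBp with respect to $\mathcal{F}$ if and only if for every $\epsilon>0$, \[\sup\{\|Tz\|: T\in\mathcal{F},\ z\in D(T,\epsilon)\}<1,\qquad\text{where } D(T,\epsilon)=S_{\mathbb{X}}\setminus\bigcup_{x\in M_T}B(x,\epsilon).\]
   Context: $S_{\mathbb{X}}$ is the unit sphere, $B(x,r)$ the open ball of centre $x$ and radius $r$, and $M_T=\{x\in S_{\mathbb{X}}:\|Tx\|=\|T\|\}$. The pair $(\mathbb{X},\mathbb{Y})$ has uniform sBPBp with respect to $\mathcal{F}$ if for every $\epsilon>0$ there exists $\eta(\epsilon)>0$ such that whenever $T\in\mathcal{F}$ and $x_0\in S_{\mathbb{X}}$ satisfy $\|Tx_0\|>1-\eta(\epsilon)$, there exists $x_1\in S_{\mathbb{X}}$ with $\|Tx_1\|=1$ and $\|x_1-x_0\|<\epsilon$. *)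

From HB Require Import structures.
From mathcomp Require Import all_boot all_order all_algebra.
From mathcomp Require Import all_classical all_reals all_analysis.
Set Implicit Arguments. Unset Strict Implicit. Unset Printing Implicit Defensive.
Import Order.TTheory GRing.Theory Num.Theory.
Import numFieldNormedType.Exports.
Local Open Scope classical_set_scope.
Local Open Scope ring_scope.

Section Defs.
Context {R : realType} {X Y : normedModType R}.

Definition unit_sphere : set X := [set x | `|x| = 1].

Definition opnorm (T : {linear X -> Y}) : R :=
  sup [set `|T x| | x in unit_sphere].

Definition norm_attaining_set (T : {linear X -> Y}) : set X :=
  [set x | unit_sphere x /\ `|T x| = opnorm T].

Definition Dset (T : {linear X -> Y}) (eps : R) : set X :=
  unit_sphere `\` \bigcup_(x in norm_attaining_set T) ball x eps.

Definition uniform_sBPBp (F : set {linear X -> Y}) : Prop :=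
  forall eps : R, 0 < eps -> exists2 eta : R, 0 < eta &
    forall T x0, F T -> unit_sphere x0 -> `|T x0| > 1 - eta ->
      exists x1, [/\ unit_sphere x1, `|T x1| = 1 & `|x1 - x0| < eps].

End Defs.

Definition dim_gt1 {R : realType} (V : lmodType R) : Prop :=
  exists x y : V, forall a b : R, a *: x + b *: y = 0 -> a = 0 /\ b = 0.

From HB Require Import structures.
From mathcomp Require Import all_boot all_order all_algebra.
From mathcomp Require Import all_classical all_reals all_analysis.
Import Order.TTheory GRing.Theory Num.Theory.
Import numFieldNormedType.Exports.
Local Open Scope classical_set_scope.
Local Open Scope ring_scope.

(* Both conditions say that a unit vector z far from M_T has |Tz| bounded away
   from 1, uniformly in T: given eta from the sBPBp, every such z satisfies
   |Tz| <= 1 - eta; conversely eta := 1 - sup {|Tz| : z in D(T, eps)} works,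
   since |T x0| > 1 - eta forces x0 out of D(T, eps), i.e. eps-close to M_T. *)

Section UniformSBPBp.
Variables (R : realType) (X Y : normedModType R).
Implicit Types (T : {linear X -> Y}) (x z : X) (eps : R).

Lemma opnorm_ub T z : opnorm T != 0 -> unit_sphere z -> `|T z| <= opnorm T.
Proof.
move=> T0 zS; have supT : has_sup [set `|T x| | x in unit_sphere].
  by apply: contrapT => noSup; move: T0; rewrite /opnorm sup_out ?eqxx.
by apply: sup_upper_bound => //; exists z.
Qed.

Lemma near_norm_attaining_setP T eps z : unit_sphere z ->
  ~ Dset T eps z <-> exists2 x, norm_attaining_set T x & `|x - z| < eps.
Proof.
move=> zS; split.
- move=> notD; have [x MTx xz] : (\bigcup_(x in norm_attaining_set T) ball x eps) z.
    by apply: contrapT => far; apply: notD.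
  by exists x; move: xz; rewrite -ball_normE.
- by move=> [x MTx xz] [_]; apply; exists x; rewrite // -ball_normE.
Qed.

Variable F : set {linear X -> Y}.
Hypothesis F_opnorm1 : forall T, F T -> opnorm T = 1.

Definition Dvalues eps : set R :=
  [set r : R | exists T : {linear X -> Y}, exists z : X,
     [/\ F T, Dset T eps z & r = `|T z|]].

Lemma Dvalues_le1 eps : ubound (Dvalues eps) 1.
Proof.
move=> _ [T [z [FT [zS _] ->]]].
by rewrite -(F_opnorm1 _ FT) opnorm_ub ?F_opnorm1 ?oner_eq0.
Qed.

Lemma sup_Dvalues_lt1 : uniform_sBPBp F ->
  forall eps, 0 < eps -> sup (Dvalues eps) < 1.
Proof.
move=> sBPBp eps eps0; have [eta eta0 etaP] := sBPBp eps eps0.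
have [->|/set0P [r0 Dr0]] := eqVneq (Dvalues eps) set0; first by rewrite sup0 ltr01.
apply: (@le_lt_trans _ _ (1 - eta)); last by rewrite ltrBlDr ltrDl.
apply: ge_sup; first by exists r0.
move=> _ [T [z [FT Dz ->]]]; rewrite leNgt; apply/negP => Tz_big.
have [x1 [x1S Tx1 x1z]] := etaP T z FT Dz.1 Tz_big.
have MTx1 : norm_attaining_set T x1 by split; rewrite // Tx1 F_opnorm1.
by apply: (near_norm_attaining_setP T eps z Dz.1).2 Dz; exists x1.
Qed.

Lemma sBPBp_of_sup_Dvalues_lt1 :
  (forall eps, 0 < eps -> sup (Dvalues eps) < 1) -> uniform_sBPBp F.
Proof.
move=> supD eps eps0; exists (1 - sup (Dvalues eps)); first by rewrite subr_gt0 supD.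
move=> T x0 FT x0S; rewrite opprB addrC subrK => Tx0_big.
have notD : ~ Dset T eps x0.
  move=> Dx0; have Tx0D : Dvalues eps `|T x0| by exists T, x0.
  have : `|T x0| <= sup (Dvalues eps).
    by apply: sup_upper_bound => //; split; [exists `|T x0| | exists 1; apply: Dvalues_le1].
  by rewrite leNgt Tx0_big.
have [x [xS Tx] xx0] := (near_norm_attaining_setP T eps x0 x0S).1 notD.
by exists x; split; rewrite // Tx F_opnorm1.
Qed.

End UniformSBPBp.

Theorem theorem2p11 (R : realType) (X Y : completeNormedModType R)
    (F : set {linear X -> Y}) :
  dim_gt1 X -> dim_gt1 Y ->
  (forall T, F T -> continuous T /\ opnorm T = 1) ->
  (uniform_sBPBp F <->
   forall eps : R, 0 < eps ->
     sup [set r : R | exists T : {linear X -> Y}, exists z : X,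
            [/\ F T, Dset T eps z & r = `|T z|]] < 1).
Proof.
move=> _ _ F_cont_opnorm1.
have F_opnorm1 T : F T -> opnorm T = 1 by move=> /F_cont_opnorm1[].
split; [exact: sup_Dvalues_lt1 | exact: sBPBp_of_sup_Dvalues_lt1].
Qed.
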